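(* Let $W$ satisfy the hypotheses in the context. For $G=(g_{ij})\in\mathbb R^{2\times2}$ with $|G|$ small, $$W_\triangle(\mathbf{Id}+G)=\tfrac12Q(G)+o(|G|^2),\qquad Q(G)=\frac{3\alpha}{16}\Big(3g_{11}^2+3g_{22}^2+2g_{11}g_{22}+4\Big(\frac{g_{12}+g_{21}}2\Big)^2\Big).$$ Moreover, $Q(G)$ depends only on the symmetric part $(G^T+G)/2$, $Q$ is positive semidefinite (hence convex) on $\mathbb R^{2\times2}$, and positive definite and strictly convex on the subspace $\mathbb R^{2\times2}_{\rm sym}$ of symmetric matrices.
   Context: $R_{\mathcal L}\in SO(2)$, $\mathbf v_1=R_{\mathcal L}\mathbf e_1$, $\mathbf v_2=R_{\mathcal L}(\tfrac12,\tfrac{\sqrt3}2)^T$. $W:[0,\infty)\to[0,\infty]$ satisfies: $W\ge0$ with $W(r)=0$ iff $r=1$; $W$ continuous on $[0,\infty)$ and $C^2$ near $1$ with $\alpha:=W''(1)>0$; $\lim_{r\to\infty}W(r)=\beta$. $W_\triangle(F)=\frac12\big(W(|F\mathbf v_1|)+W(|F\mathbf v_2|)+W(|F(\mathbf v_2-\mathbf v_1)|)\big)$ for $F\in\mathbb R^{2\times2}$. *)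

From HB Require Import structures.
From mathcomp Require Import all_boot all_order all_algebra.
From mathcomp Require Import all_classical all_reals all_analysis.
Set Implicit Arguments. Unset Strict Implicit. Unset Printing Implicit Defensive.
Import Order.TTheory GRing.Theory Num.Theory.
Import numFieldNormedType.Exports.
Local Open Scope classical_set_scope.
Local Open Scope ring_scope.

Section Defs.
Variable R : realType.

Definition vnorm (v : 'cV[R]_2) : R := Num.sqrt (v 0 0 ^+ 2 + v 1 0 ^+ 2).

Definition frob (G : 'M[R]_2) : R :=
  Num.sqrt (\sum_(i < 2) \sum_(j < 2) G i j ^+ 2).

Definition col2 (a b : R) : 'cV[R]_2 :=
  \col_(i < 2) (if i == 0 then a else b).

Definition is_SO2 (Rl : 'M[R]_2) : Prop := Rl^T *m Rl = 1%:M /\ \det Rl = 1.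

Definition v1 (Rl : 'M[R]_2) : 'cV[R]_2 := Rl *m col2 1 0.
Definition v2 (Rl : 'M[R]_2) : 'cV[R]_2 := Rl *m col2 (2^-1) (Num.sqrt 3 / 2).

Definition Wtri (W : R -> \bar R) (Rl : 'M[R]_2) (F : 'M[R]_2) : \bar R :=
  ((W (vnorm (F *m v1 Rl)) + W (vnorm (F *m v2 Rl))
    + W (vnorm (F *m (v2 Rl - v1 Rl)))) * (2^-1)%:E)%E.

Definition Qform (alpha : R) (G : 'M[R]_2) : R :=
  (3 * alpha / 16) * (3 * G 0 0 ^+ 2 + 3 * G 1 1 ^+ 2 + 2 * G 0 0 * G 1 1
                      + 4 * ((G 0 1 + G 1 0) / 2) ^+ 2).

Definition W_hyp (W : R -> \bar R) (alpha beta : R) : Prop :=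
  (forall r, 0 <= r -> (0 <= W r)%E) /\
  (forall r, 0 <= r -> (W r = 0%E <-> r = 1)) /\
  {within [set r : R | 0 <= r], continuous W} /\
  (exists eta : R, 0 < eta /\ exists w : R -> R,
     (forall x, `|x - 1| < eta -> W x = (w x)%:E) /\
     (forall x, `|x - 1| < eta ->
        derivable w x 1 /\ derivable (derive1 w) x 1 /\
        {for x, continuous (derive1n 2 w)}) /\
     derive1n 2 w 1 = alpha) /\
  0 < alpha /\
  W r @[r --> +oo] --> beta%:E.

End Defs.

From HB Require Import structures.
From mathcomp Require Import all_boot all_order all_algebra.
From mathcomp Require Import all_classical all_reals all_analysis.
From mathcomp Require Import ring lra.
Import Order.TTheory GRing.Theory Num.Theory.
Import numFieldNormedType.Exports.

(* A bond [v] of unit length is stretched by [Id + G] to length [r] with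
   [r^2 = 1 + 2 v.Gv + |Gv|^2], so [r - 1 = v.Gv + O(|G|^2)].  Since [W] has a
   nondegenerate minimum at [1], [W r = alpha/2 (r - 1)^2 + o((r - 1)^2)], and
   summing over the three bonds gives [alpha/4] times the sum of the squared
   strains [(v.Gv)^2].  The bonds are a rotated hexagonal star, and for such a
   star this sum is the rotation-invariant form
   [Q G = 3 alpha/16 (2 (tr G)^2 + (g11 - g22)^2 + (g12 + g21)^2)],
   from which its symmetry, positivity and convexity properties can be read off. *)

Set Implicit Arguments.
Unset Strict Implicit.
Unset Printing Implicit Defensive.

Local Open Scope ring_scope.

Section TwoByTwo.
Variable R : realType.
Implicit Types (G Rl : 'M[R]_2) (v : 'cV[R]_2).

Lemma ord2P (i : 'I_2) : i = 0 \/ i = 1.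
Proof. by case: i => [[|[|//]] ?]; [left|right]; apply: val_inj. Qed.

Lemma sum_ord2 (F : 'I_2 -> R) : \sum_(i < 2) F i = F 0 + F 1.
Proof. by rewrite big_ord_recl big_ord1; congr (F _ + F _); apply: val_inj. Qed.

Lemma col2E v : v = col2 (v 0 0) (v 1 0).
Proof.
apply/matrixP => i j; rewrite !mxE ord1.
by case: (ord2P i) => ->.
Qed.

Lemma mulmx_col2 (M : 'M[R]_2) x y :
  M *m col2 x y = col2 (M 0 0 * x + M 0 1 * y) (M 1 0 * x + M 1 1 * y).
Proof.
apply/matrixP => i j; rewrite !mxE sum_ord2 !mxE /=.
by case: (ord2P i) => ->.
Qed.

Lemma col2B x y x' y' : col2 x y - col2 x' y' = col2 (x - x') (y - y') :> 'cV[R]_2.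
Proof. by apply/matrixP => i j; rewrite !mxE; case: ifP. Qed.

Lemma frob_sqr G :
  frob G ^+ 2 = G 0 0 ^+ 2 + G 0 1 ^+ 2 + G 1 0 ^+ 2 + G 1 1 ^+ 2.
Proof.
rewrite /frob !sum_ord2 sqr_sqrtr; first by rewrite !addrA.
by rewrite !addr_ge0 ?sqr_ge0.
Qed.

Lemma frob_ge0 G : 0 <= frob G.
Proof. exact: sqrtr_ge0. Qed.

Lemma frob_gt0 G : G != 0 -> 0 < frob G.
Proof.
move=> G0; rewrite lt_neqAle frob_ge0 andbT eq_sym -sqrf_eq0 frob_sqr.
apply: contra G0 => /eqP S0; apply/eqP/matrixP => i j; rewrite mxE.
have sqr_le0 i' j' : G i' j' ^+ 2 <= 0.
  have := sqr_ge0 (G 0 0); have := sqr_ge0 (G 0 1).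
  have := sqr_ge0 (G 1 0); have := sqr_ge0 (G 1 1).
  by case: (ord2P i') => ->; case: (ord2P j') => ->; lra.
by apply/eqP; rewrite -sqrf_eq0 eq_le sqr_le0 sqr_ge0.
Qed.

Lemma vnorm_sqr v : vnorm v ^+ 2 = v 0 0 ^+ 2 + v 1 0 ^+ 2.
Proof. by rewrite sqr_sqrtr // addr_ge0 ?sqr_ge0. Qed.

Lemma vnorm_col2 (x y : R) : vnorm (col2 x y) = Num.sqrt (x ^+ 2 + y ^+ 2).
Proof. by rewrite /vnorm !mxE. Qed.

Lemma SO2_entries Rl : is_SO2 Rl ->
  [/\ Rl 0 1 = - Rl 1 0, Rl 1 1 = Rl 0 0 & Rl 0 0 ^+ 2 + Rl 1 0 ^+ 2 = 1].
Proof.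
case=> /matrixP RTR detR.
have := RTR 0 0; have := RTR 1 1.
move: detR; rewrite (expand_det_row _ 0) sum_ord2 /cofactor !det_mx11 !mxE !sum_ord2 !mxE /=.
have -> : lift 0 0 = 1 :> 'I_2 by apply: val_inj.
have -> : lift 1 0 = 0 :> 'I_2 by apply: val_inj.
rewrite expr0 expr1 !mul1r => detR n1 n0.
(* the columns [c1], [c2] and the quarter turn [J] satisfy
   [|c2 - J c1|^2 = |c1|^2 + |c2|^2 - 2 det Rl = 0] *)
have E : (Rl 0 1 + Rl 1 0) ^+ 2 + (Rl 1 1 - Rl 0 0) ^+ 2 = 0.
  have -> : (Rl 0 1 + Rl 1 0) ^+ 2 + (Rl 1 1 - Rl 0 0) ^+ 2 =
    (Rl 0 0 * Rl 0 0 + Rl 1 0 * Rl 1 0) + (Rl 0 1 * Rl 0 1 + Rl 1 1 * Rl 1 1)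
    - 2 * (Rl 0 0 * Rl 1 1 + Rl 0 1 * (-1 * Rl 1 0)) by ring.
  by rewrite detR n0 n1; lra.
have [/eqP E1 /eqP E2] : (Rl 0 1 + Rl 1 0) ^+ 2 = 0 /\ (Rl 1 1 - Rl 0 0) ^+ 2 = 0.
  by have := sqr_ge0 (Rl 1 1 - Rl 0 0); have := sqr_ge0 (Rl 0 1 + Rl 1 0); split; lra.
move: E1 E2; rewrite !sqrf_eq0 subr_eq0 addr_eq0 => /eqP -> /eqP ->.
by split => //; rewrite !expr2.
Qed.

Lemma vnorm_SO2 Rl v : is_SO2 Rl -> vnorm (Rl *m v) = vnorm v.
Proof.
case/SO2_entries => R01 R11 pr.
rewrite [v]col2E mulmx_col2 !vnorm_col2 R01 R11; congr Num.sqrt.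
have -> : (Rl 0 0 * v 0 0 + - Rl 1 0 * v 1 0) ^+ 2 + (Rl 1 0 * v 0 0 + Rl 0 0 * v 1 0) ^+ 2
  = (Rl 0 0 ^+ 2 + Rl 1 0 ^+ 2) * (v 0 0 ^+ 2 + v 1 0 ^+ 2) by ring.
by rewrite pr mul1r.
Qed.

End TwoByTwo.

Section QuadraticForm.
Variable R : realType.
Implicit Types (G H : 'M[R]_2) (alpha t : R).

Lemma Qform_sum_sqr alpha G : Qform alpha G =
  3 * alpha / 16 * (2 * (G 0 0 + G 1 1) ^+ 2 + (G 0 0 - G 1 1) ^+ 2 + (G 0 1 + G 1 0) ^+ 2).
Proof. by rewrite /Qform; field. Qed.

Lemma Qform_symmetric_part alpha G : Qform alpha G = Qform alpha (2^-1 *: (G^T + G)).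
Proof. by rewrite /Qform !mxE; field. Qed.

Lemma Qform_ge0 alpha G : 0 <= alpha -> 0 <= Qform alpha G.
Proof.
move=> a0; rewrite Qform_sum_sqr; apply: mulr_ge0; first by rewrite divr_ge0 ?mulr_ge0.
by rewrite addr_ge0 ?sqr_ge0 // addr_ge0 ?sqr_ge0 // mulr_ge0 ?sqr_ge0.
Qed.

Lemma Qform_sym_ge alpha G : 0 <= alpha -> G^T = G ->
  3 * alpha / 8 * frob G ^+ 2 <= Qform alpha G.
Proof.
move=> a0 GT; have G10 : G 1 0 = G 0 1 by rewrite -[in LHS]GT mxE.
rewrite Qform_sum_sqr frob_sqr G10 -subr_ge0.
have -> : 3 * alpha / 16 * (2 * (G 0 0 + G 1 1) ^+ 2 + (G 0 0 - G 1 1) ^+ 2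
      + (G 0 1 + G 0 1) ^+ 2) - 3 * alpha / 8 * (G 0 0 ^+ 2 + G 0 1 ^+ 2
      + G 0 1 ^+ 2 + G 1 1 ^+ 2) = 3 * alpha / 16 * (G 0 0 + G 1 1) ^+ 2 by field.
by rewrite mulr_ge0 ?sqr_ge0 ?divr_ge0 ?mulr_ge0.
Qed.

Lemma Qform_gt0 alpha G : 0 < alpha -> G^T = G -> G != 0 -> 0 < Qform alpha G.
Proof.
move=> a0 GT G0; apply: lt_le_trans (Qform_sym_ge (ltW a0) GT).
by rewrite mulr_gt0 ?exprn_gt0 ?frob_gt0 ?divr_gt0 ?mulr_gt0.
Qed.

Lemma Qform_convex_gap alpha G H t :
  t * Qform alpha G + (1 - t) * Qform alpha H - Qform alpha (t *: G + (1 - t) *: H)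
  = t * (1 - t) * Qform alpha (G - H).
Proof. by rewrite /Qform !mxE; ring. Qed.

Lemma Qform_convex alpha G H t : 0 <= alpha -> 0 <= t <= 1 ->
  Qform alpha (t *: G + (1 - t) *: H) <= t * Qform alpha G + (1 - t) * Qform alpha H.
Proof.
move=> a0 /andP[t0 t1]; rewrite -subr_ge0 Qform_convex_gap.
by rewrite mulr_ge0 ?Qform_ge0 // mulr_ge0 // subr_ge0.
Qed.

Lemma Qform_strictly_convex alpha G H t : 0 < alpha -> G^T = G -> H^T = H ->
  G != H -> 0 < t < 1 ->
  Qform alpha (t *: G + (1 - t) *: H) < t * Qform alpha G + (1 - t) * Qform alpha H.
Proof.
move=> a0 GT HT GH /andP[t0 t1]; rewrite -subr_gt0 Qform_convex_gap.
rewrite mulr_gt0 ?Qform_gt0 ?subr_eq0 // ?mulr_gt0 ?subr_gt0 //.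
by rewrite linearB /= GT HT.
Qed.

End QuadraticForm.

Section BondStrains.
Variable R : realType.
Implicit Types (G Rl : 'M[R]_2) (v : 'cV[R]_2).

Definition strain G v : R := (v^T *m G *m v) 0 0.

Lemma strain_col2 G x y :
  strain G (col2 x y) = x * (G 0 0 * x + G 0 1 * y) + y * (G 1 0 * x + G 1 1 * y).
Proof. by rewrite /strain !(mxE, sum_ord2) /=; ring. Qed.

Lemma Qform_hexagonal_strains alpha G p r t : t ^+ 2 = 3 -> p ^+ 2 + r ^+ 2 = 1 ->
  Qform alpha G = alpha / 2 * (strain G (col2 p r) ^+ 2
    + strain G (col2 (p / 2 - r * t / 2) (r / 2 + p * t / 2)) ^+ 2
    + strain G (col2 (- p / 2 - r * t / 2) (- r / 2 + p * t / 2)) ^+ 2).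
Proof.
move=> t2 pr.
pose m11 := strain G (col2 p r); pose m22 := strain G (col2 (- r) p).
pose s := strain G (col2 (p - r) (r + p)) - m11 - m22.
(* expand the two oblique bonds in the frame [(p, r)], [(-r, p)] *)
have -> : strain G (col2 (p / 2 - r * t / 2) (r / 2 + p * t / 2))
  = (m11 + 3 * m22) / 4 + t * s / 4 by rewrite -t2 /s /m11 /m22 !strain_col2; field.
have -> : strain G (col2 (- p / 2 - r * t / 2) (- r / 2 + p * t / 2))
  = (m11 + 3 * m22) / 4 - t * s / 4 by rewrite -t2 /s /m11 /m22 !strain_col2; field.
(* [Q] is invariant under rotating [G] by [(p, r)] *)
have rot : 3 * m11 ^+ 2 + 2 * m11 * m22 + 3 * m22 ^+ 2 + s ^+ 2
  = (p ^+ 2 + r ^+ 2) ^+ 2 * (3 * G 0 0 ^+ 2 + 3 * G 1 1 ^+ 2 + 2 * G 0 0 * G 1 1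
                              + (G 0 1 + G 1 0) ^+ 2) by rewrite /s /m11 /m22 !strain_col2; ring.
rewrite pr expr1n mul1r in rot.
have -> : alpha / 2 * (m11 ^+ 2 + ((m11 + 3 * m22) / 4 + t * s / 4) ^+ 2
    + ((m11 + 3 * m22) / 4 - t * s / 4) ^+ 2)
  = alpha / 2 * (m11 ^+ 2 + 2 * ((m11 + 3 * m22) / 4) ^+ 2 + t ^+ 2 * s ^+ 2 / 8) by field.
rewrite t2 (_ : alpha / 2 * _ = 3 * alpha / 16 * (3 * m11 ^+ 2 + 2 * m11 * m22
                                                 + 3 * m22 ^+ 2 + s ^+ 2)); last by field.
by rewrite rot /Qform; field.
Qed.

Lemma Qform_bond_strains alpha Rl G : is_SO2 Rl ->
  Qform alpha G = alpha / 2 * (strain G (v1 Rl) ^+ 2 + strain G (v2 Rl) ^+ 2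
                               + strain G (v2 Rl - v1 Rl) ^+ 2).
Proof.
case/SO2_entries => R01 R11 pr.
set t : R := Num.sqrt 3; have t2 : t ^+ 2 = 3 by rewrite sqr_sqrtr.
rewrite (Qform_hexagonal_strains alpha G t2 pr) /v1 /v2 !mulmx_col2 col2B R01 R11.
rewrite !mulr1 !mulr0 !addr0.
have -> : Rl 0 0 / 2 + - Rl 1 0 * (t / 2) = Rl 0 0 / 2 - Rl 1 0 * t / 2 by field.
have -> : Rl 1 0 / 2 + Rl 0 0 * (t / 2) = Rl 1 0 / 2 + Rl 0 0 * t / 2 by field.
have -> : Rl 0 0 / 2 - Rl 1 0 * t / 2 - Rl 0 0 = - Rl 0 0 / 2 - Rl 1 0 * t / 2 by field.
by have -> : Rl 1 0 / 2 + Rl 0 0 * t / 2 - Rl 1 0 = - Rl 1 0 / 2 + Rl 0 0 * t / 2 by field.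
Qed.

Lemma bonds_unit Rl : is_SO2 Rl ->
  [/\ vnorm (v1 Rl) = 1, vnorm (v2 Rl) = 1 & vnorm (v2 Rl - v1 Rl) = 1].
Proof.
move=> SO2; rewrite /v1 /v2 -mulmxBr !vnorm_SO2 // col2B !vnorm_col2.
have t2 : Num.sqrt 3 ^+ 2 = 3 :> R by rewrite sqr_sqrtr.
have h1 : 1 ^+ 2 + 0 ^+ 2 = 1 :> R by rewrite expr1n expr0n addr0.
have h2 : 2^-1 ^+ 2 + (Num.sqrt 3 / 2) ^+ 2 = 1 :> R.
  by rewrite expr_div_n t2; field.
have h3 : (2^-1 - 1) ^+ 2 + (Num.sqrt 3 / 2 - 0) ^+ 2 = 1 :> R.
  by rewrite subr0 expr_div_n t2; field.
by rewrite h1 h2 h3 sqrtr1.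
Qed.

Lemma strainE G v : strain G v = v 0 0 * (G *m v) 0 0 + v 1 0 * (G *m v) 1 0.
Proof. by rewrite /strain -mulmxA mxE sum_ord2 !mxE. Qed.

Lemma strain_sqr_le G v : vnorm v = 1 ->
  strain G v ^+ 2 <= (G *m v) 0 0 ^+ 2 + (G *m v) 1 0 ^+ 2.
Proof.
move=> /(congr1 (fun x => x ^+ 2)); rewrite vnorm_sqr expr1n strainE => v_unit.
set x := v 0 0 in v_unit *; set y := v 1 0 in v_unit *.
set g := (G *m v) 0 0; set h := (G *m v) 1 0.
have CS : (g ^+ 2 + h ^+ 2) * (x ^+ 2 + y ^+ 2) - (x * g + y * h) ^+ 2 = (g * y - h * x) ^+ 2.
  by ring.
by rewrite -subr_ge0 -[X in X - _]mulr1 -v_unit CS sqr_ge0.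
Qed.

Lemma mulmx_sqr_le G v : vnorm v = 1 ->
  (G *m v) 0 0 ^+ 2 + (G *m v) 1 0 ^+ 2 <= frob G ^+ 2.
Proof.
move=> /(congr1 (fun x => x ^+ 2)); rewrite vnorm_sqr expr1n frob_sqr => v_unit.
rewrite [v]col2E mulmx_col2 !mxE /=.
set x := v 0 0 in v_unit *; set y := v 1 0 in v_unit *.
have CS : (G 0 0 ^+ 2 + G 0 1 ^+ 2 + G 1 0 ^+ 2 + G 1 1 ^+ 2) * (x ^+ 2 + y ^+ 2)
  - ((G 0 0 * x + G 0 1 * y) ^+ 2 + (G 1 0 * x + G 1 1 * y) ^+ 2)
  = (G 0 0 * y - G 0 1 * x) ^+ 2 + (G 1 0 * y - G 1 1 * x) ^+ 2 by ring.
by rewrite -subr_ge0 -[X in X - _]mulr1 -v_unit CS addr_ge0 ?sqr_ge0.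
Qed.

Lemma vnorm_stretch_sqr G v : vnorm ((1%:M + G) *m v) ^+ 2
  = vnorm v ^+ 2 + 2 * strain G v + ((G *m v) 0 0 ^+ 2 + (G *m v) 1 0 ^+ 2).
Proof. by rewrite !vnorm_sqr strainE mulmxDl mul1mx !mxE; ring. Qed.

Lemma sqrt_expansion_bounds (m u f r : R) : 0 <= f <= 1 / 4 -> m ^+ 2 <= u <= f ^+ 2 ->
  0 <= r -> r ^+ 2 = 1 + 2 * m + u ->
  `|r - 1| <= 2 * f /\ `|(r - 1) ^+ 2 - m ^+ 2| <= 3 * f ^+ 3.
Proof.
move=> /andP[f0 f4] /andP[mu uf] r0 r2.
have /andP[mlo mhi] : - f <= m <= f.
  by rewrite -ler_norml -ler_sqr ?nnegrE // ?normr_ge0 // real_normK ?num_real //; lra.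
(* [(r - 1 - m) (r + 1 + m) = u - m^2] lies in [[0, f^2]] *)
have rm : 1 + m <= r by nra.
have rm2 : r - 1 - m <= f ^+ 2 by nra.
split; first by rewrite ler_norml; apply/andP; split; nra.
have -> : (r - 1) ^+ 2 - m ^+ 2 = (r - 1 - m) * (r - 1 + m) by ring.
have h1 : `|r - 1 - m| <= f ^+ 2 by rewrite ger0_norm; lra.
have h2 : `|r - 1 + m| <= 3 * f by rewrite ler_norml; apply/andP; split; nra.
rewrite normrM (_ : 3 * f ^+ 3 = f ^+ 2 * (3 * f)); last by ring.
exact: ler_pM (normr_ge0 _) (normr_ge0 _) h1 h2.
Qed.

Lemma unit_stretch_bounds G v : vnorm v = 1 -> frob G <= 1 / 4 ->
  `|vnorm ((1%:M + G) *m v) - 1| <= 2 * frob G /\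
  `|(vnorm ((1%:M + G) *m v) - 1) ^+ 2 - strain G v ^+ 2| <= 3 * frob G ^+ 3.
Proof.
move=> v_unit f4; have := vnorm_stretch_sqr G v; rewrite v_unit expr1n.
apply: sqrt_expansion_bounds.
- by rewrite frob_ge0.
- by rewrite strain_sqr_le // mulmx_sqr_le.
- exact: sqrtr_ge0.
Qed.

End BondStrains.

Section SecondOrderExpansion.
Local Open Scope classical_set_scope.
Variable R : realType.
Implicit Types (f df w : R -> R) (a b c eta : R).

Lemma mvt_norm_le f df a b k :
  (forall y, `|y - a| <= `|b - a| -> is_derive y 1 f (df y) /\ `|df y| <= k) ->
  `|f b - f a| <= k * `|b - a|.
Proof.
move=> fD.
have dv y : `|y - a| <= `|b - a| -> derivable f y 1.
  by move=> /fD[fy _]; apply: ex_derive.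
have [ab|ba|<-] := ltgtP a b; last by rewrite !subrr normr0 mulr0.
- have seg y : a <= y <= b -> `|y - a| <= `|b - a|.
    by case/andP=> ay yb; rewrite !ger0_norm ?subr_ge0 ?lerD2r // ltW.
  have cont : {within `[a, b], continuous f}.
    by apply: derivable_within_continuous => y; rewrite in_itv => /seg/dv.
  have D x : x \in `]a, b[%R -> is_derive x 1 f (df x).
    by rewrite in_itv => /andP[ax xb]; apply: (fD x (seg _ _)).1; rewrite !ltW.
  have [y] := MVT_segment (ltW ab) D cont; rewrite in_itv => /seg ya ->.
  by rewrite normrM ler_wpM2r // (fD y ya).2.
- have seg y : b <= y <= a -> `|y - a| <= `|b - a|.
    by case/andP=> by_ ya; rewrite !ler0_norm ?subr_le0 ?lerN2 ?lerD2r // ltW.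
  have cont : {within `[b, a], continuous f}.
    by apply: derivable_within_continuous => y; rewrite in_itv => /seg/dv.
  have D x : x \in `]b, a[%R -> is_derive x 1 f (df x).
    by rewrite in_itv => /andP[bx xa]; apply: (fD x (seg _ _)).1; rewrite !ltW.
  have [y] := MVT_segment (ltW ba) D cont; rewrite in_itv => /seg ya E.
  by rewrite -normrN opprB E normrM distrC ler_wpM2r // (fD y ya).2.
Qed.

Lemma is_derive_shifted_sqr (k c x : R) :
  is_derive x 1 (fun y => k / 2 * (y - c) ^+ 2) (k * (x - c)).
Proof.
have -> : (fun y => k / 2 * (y - c) ^+ 2) = (k / 2) *: ((@id R - cst c) ^+ 2).
  by apply/funext.
apply: is_derive_eq; rewrite /= subr0 expr1 /cst /= [_%:A]mulr1 /GRing.scale /=.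
by have -> : (id - (fun=> c)) x = x - c :> R by []; field.
Qed.

Lemma is_derive_shifted_lin (k c x : R) : is_derive x 1 (fun y => k * (y - c)) k.
Proof.
have -> : (fun y => k * (y - c)) = k *: (@id R - cst c) by apply/funext.
by apply: is_derive_eq; rewrite /= subr0 /GRing.scale /= mulr1.
Qed.

Lemma derive1_at_local_min w c eta : 0 < eta ->
  (forall x, `|x - c| < eta -> derivable w x 1) ->
  (forall x, `|x - c| < eta -> w c <= w x) -> derive1 w c = 0.
Proof.
move=> eta0 dw wmin.
have ball x : x \in `]c - eta, c + eta[%R -> `|x - c| < eta.
  by rewrite in_itv /= => /andP[? ?]; rewrite ltr_norml; apply/andP; split; lra.
have cI : c \in `]c - eta, c + eta[%R by rewrite in_itv /=; apply/andP; split; lra.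
have ab : c - eta <= c + eta by lra.
have D := derive1_at_min ab (fun x xI => dw x (ball x xI)) cI (fun x xI => wmin x (ball x xI)).
by rewrite derive1E derive_val.
Qed.

Lemma taylor2_littleo w c eta : 0 < eta ->
  (forall x, `|x - c| < eta -> derivable w x 1 /\ derivable (derive1 w) x 1) ->
  {for c, continuous (derive1n 2 w)} -> w c = 0 -> derive1 w c = 0 ->
  forall e, 0 < e -> exists2 d, 0 < d <= eta & forall x, `|x - c| < d ->
    `|w x - derive1n 2 w c / 2 * (x - c) ^+ 2| <= e * (x - c) ^+ 2.
Proof.
move=> eta0 dw w''c wc w'c e e0; set k := derive1n 2 w c.
have /(nbhs_ballP _ _).1 [d0 d0_gt0 near_c] : \forall y \near c, `|k - derive1n 2 w y| <= e.
  exact: cvgr_dist_le w''c _ e0.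
have d_gt0 : 0 < Order.min d0 eta by rewrite lt_min d0_gt0 eta0.
exists (Order.min d0 eta); first by rewrite d_gt0 ge_min lexx orbT.
have inball x y : `|y - c| <= `|x - c| -> `|x - c| < Order.min d0 eta ->
    `|y - c| < d0 /\ `|y - c| < eta.
  by move=> yx; rewrite lt_min => /andP[xd xe]; split; apply: le_lt_trans yx _.
(* the mean value bound, applied first to [w' - k (y - c)], then to [w - k/2 (y - c)^2] *)
have w'_near x : `|x - c| < Order.min d0 eta -> `|derive1 w x - k * (x - c)| <= e * `|x - c|.
  move=> xd; have := @mvt_norm_le (fun y => derive1 w y - k * (y - c))
    (fun y => derive1n 2 w y - k) c x e.
  rewrite subrr mulr0 w'c subr0 subr0; apply => y yx.
  have [yd ye] := inball x y yx xd; split.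
    apply: is_deriveB; last exact: is_derive_shifted_lin.
    by have := derivableP (dw y ye).2; rewrite -derive1E.
  by rewrite distrC; apply: near_c; rewrite /ball /= distrC.
move=> x xd.
have -> : e * (x - c) ^+ 2 = e * `|x - c| * `|x - c|.
  by rewrite -mulrA -expr2 real_normK // num_real.
have := @mvt_norm_le (fun y => w y - k / 2 * (y - c) ^+ 2)
  (fun y => derive1 w y - k * (y - c)) c x (e * `|x - c|).
rewrite subrr expr0n /= mulr0 wc subr0 subr0.
apply=> y yx; have [_ ye] := inball x y yx xd; split.
  apply: is_deriveB; last exact: is_derive_shifted_sqr.
  by have := derivableP (dw y ye).1; rewrite -derive1E.
apply: le_trans (w'_near y (le_lt_trans yx xd)) _.
by rewrite ler_wpM2l // ltW.
Qed.

End SecondOrderExpansion.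

Section Expansion.
Variable R : realType.
Implicit Types (G Rl : 'M[R]_2) (v : 'cV[R]_2) (W : R -> \bar R).

Lemma W_local_quadratic W alpha beta : W_hyp W alpha beta ->
  forall e, 0 < e -> exists2 d, 0 < d & forall x, `|x - 1| < d ->
    exists2 wx, W x = wx%:E & `|wx - alpha / 2 * (x - 1) ^+ 2| <= e * (x - 1) ^+ 2.
Proof.
case=> W_ge0 [W_eq0 [_ [[eta [eta_gt0 [w [Ww [w_C2 w''1]]]]] _]]] e e_gt0.
have dw x : `|x - 1| < eta -> derivable w x 1 /\ derivable (derive1 w) x 1.
  by move=> /w_C2[? []].
have eta1 : `|1 - 1| < eta by rewrite subrr normr0.
have w1 : w 1 = 0 by have := (W_eq0 1 ler01).2 erefl; rewrite Ww // => -[].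
have w'1 : derive1 w 1 = 0.
  apply: (@derive1_at_local_min _ _ _ (Order.min eta 1)); first by rewrite lt_min eta_gt0 ltr01.
    by move=> x; rewrite lt_min => /andP[/dw[]].
  move=> x; rewrite lt_min => /andP[xe]; rewrite ltr_norml => /andP[x0 _].
  by rewrite w1 -lee_fin -Ww //; apply: W_ge0; lra.
have [d /andP[d_gt0 d_eta] wT] := taylor2_littleo eta_gt0 dw (w_C2 1 eta1).2.2 w1 w'1 e_gt0.
exists d => // x xd; exists (w x); first by apply: Ww; apply: lt_le_trans d_eta.
by rewrite -w''1; apply: wT.
Qed.

Lemma W_bond_expansion W alpha e d G v : 0 <= alpha -> 0 <= e ->
  (forall x, `|x - 1| < d ->
    exists2 wx, W x = wx%:E & `|wx - alpha / 2 * (x - 1) ^+ 2| <= e * (x - 1) ^+ 2) ->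
  vnorm v = 1 -> frob G <= 1 / 4 -> 2 * frob G < d ->
  exists2 wr, W (vnorm ((1%:M + G) *m v)) = wr%:E &
    `|wr - alpha / 2 * strain G v ^+ 2| <= e * (4 * frob G ^+ 2) + alpha / 2 * (3 * frob G ^+ 3).
Proof.
move=> a0 e0 Wloc v_unit f4 fd; set r := vnorm _.
have [r1 rm] := unit_stretch_bounds v_unit f4.
have [wr Wr wrT] := Wloc r (le_lt_trans r1 fd); exists wr => //.
have r1f : (r - 1) ^+ 2 <= 4 * frob G ^+ 2.
  rewrite -real_normK ?num_real // (_ : 4 * _ = (2 * frob G) ^+ 2); last by ring.
  by rewrite ler_sqr ?nnegrE ?normr_ge0 ?mulr_ge0 ?frob_ge0.
rewrite (_ : wr - _ = (wr - alpha / 2 * (r - 1) ^+ 2)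
                      + alpha / 2 * ((r - 1) ^+ 2 - strain G v ^+ 2)); last by ring.
apply: le_trans (ler_normD _ _) (lerD (le_trans wrT _) _); first by rewrite ler_wpM2l.
by rewrite normrM ger0_norm ?divr_ge0 // ler_wpM2l ?divr_ge0.
Qed.

Lemma half_sum3_dist (a1 a2 a3 b1 b2 b3 k : R) :
  `|a1 - b1| <= k -> `|a2 - b2| <= k -> `|a3 - b3| <= k ->
  `|(a1 + a2 + a3) / 2 - (b1 + b2 + b3) / 2| <= 3 / 2 * k.
Proof.
move=> h1 h2 h3.
rewrite (_ : _ - _ = ((a1 - b1) + (a2 - b2) + (a3 - b3)) / 2); last by field.
rewrite normrM normfV normr_nat.
have := ler_normD (a1 - b1 + (a2 - b2)) (a3 - b3).
have := ler_normD (a1 - b1) (a2 - b2); lra.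
Qed.

Lemma Wtri_expansion Rl W alpha beta : is_SO2 Rl -> W_hyp W alpha beta ->
  forall eps, 0 < eps -> exists delta, 0 < delta /\ forall G, frob G < delta ->
    (`|Wtri W Rl (1%:M + G) - (Qform alpha G / 2)%:E| <= (eps * frob G ^+ 2)%:E)%E.
Proof.
move=> SO2 hW eps eps_gt0.
have a_gt0 : 0 < alpha by case: hW => _ [_ [_ [_ []]]].
have e_gt0 : 0 < eps / 12 by rewrite divr_gt0.
have [d d_gt0 Wloc] := W_local_quadratic hW e_gt0.
exists (Order.min (1 / 4) (Order.min (d / 2) (eps / (5 * alpha)))); split.
  by rewrite !lt_min !divr_gt0 ?mulr_gt0.
move=> G; rewrite !lt_min => /andP[f4 /andP[fd fa]].
have {}f4 := ltW f4.
have {}fd : 2 * frob G < d by rewrite -ltr_pdivlMl // mulrC.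
have {}fa : alpha * frob G <= eps / 5.
  rewrite (_ : eps / 5 = alpha * (eps / (5 * alpha))); last by field; rewrite gt_eqF.
  by rewrite ler_pM2l // ltW.
have [u1 u2 u3] := bonds_unit SO2.
have [w1 W1 b1] := W_bond_expansion (ltW a_gt0) (ltW e_gt0) Wloc u1 f4 fd.
have [w2 W2 b2] := W_bond_expansion (ltW a_gt0) (ltW e_gt0) Wloc u2 f4 fd.
have [w3 W3 b3] := W_bond_expansion (ltW a_gt0) (ltW e_gt0) Wloc u3 f4 fd.
rewrite /Wtri W1 W2 W3 -!EFinD /= lee_fin (Qform_bond_strains _ _ SO2) mulrDr mulrDr.
apply: le_trans (half_sum3_dist b1 b2 b3) _.
(* the cubic error term is absorbed since [alpha * frob G <= eps / 5] *)
have : alpha * frob G ^+ 3 <= eps / 5 * frob G ^+ 2.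
  rewrite (_ : alpha * _ = alpha * frob G * frob G ^+ 2); last by ring.
  by rewrite ler_wpM2r ?sqr_ge0.
have := mulr_ge0 (ltW eps_gt0) (sqr_ge0 (frob G)); lra.
Qed.

End Expansion.

Theorem lemma3p2 (R : realType) (Rl : 'M[R]_2) (W : R -> \bar R) (alpha beta : R) :
  is_SO2 Rl -> W_hyp W alpha beta ->
  (forall eps : R, 0 < eps -> exists delta : R, 0 < delta /\
     forall G : 'M[R]_2, frob G < delta ->
       (`| Wtri W Rl (1%:M + G) - (Qform alpha G / 2)%:E | <= (eps * frob G ^+ 2)%:E)%E) /\
  (forall G : 'M[R]_2, Qform alpha G = Qform alpha (2^-1 *: (G^T + G))) /\
  (forall G : 'M[R]_2, 0 <= Qform alpha G) /\
  (forall (G H : 'M[R]_2) (t : R), 0 <= t <= 1 ->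
     Qform alpha (t *: G + (1 - t) *: H)
       <= t * Qform alpha G + (1 - t) * Qform alpha H) /\
  (forall G : 'M[R]_2, G^T = G -> G != 0 -> 0 < Qform alpha G) /\
  (forall (G H : 'M[R]_2) (t : R), G^T = G -> H^T = H -> G != H -> 0 < t < 1 ->
     Qform alpha (t *: G + (1 - t) *: H)
       < t * Qform alpha G + (1 - t) * Qform alpha H).
Proof.
move=> SO2 hW; have a_gt0 : 0 < alpha by case: hW => _ [_ [_ [_ []]]].
split; first exact: Wtri_expansion SO2 hW.
split; first exact: Qform_symmetric_part.
split; first by move=> G; apply: Qform_ge0; apply: ltW.
split; first by move=> G H t; apply: Qform_convex; apply: ltW.
split; first by move=> G; apply: Qform_gt0.
by move=> G H t; apply: Qform_strictly_convex.
Qed.
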